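(* Let $(X,\tau)$ be a topological space, let $X_n\subseteq X$ ($n\in\mathbb{N}\cup\{0\}$) be subspaces, and let $f_n:X_n\to X_{n+1}$ be continuous maps, forming the nonautonomous discrete system $\{f_n\}_{n=0}^\infty$. Assume that $X_0$ is a second countable subspace of $X$ and that $X$ is first countable at every point of $X_0$. Suppose that the system $\{f_n\}_{n=0}^\infty$ is topologically transitive on $X_0$ and that $\overline{O}\neq X_0$, where $$O=\{x\in X_0 : \overline{\operatorname{orb}(x)}^{X}\cap X_0 = X_0\}.$$ Then $X_0$ is not a Baire space.
   Context: For $x_0\in X_0$, the orbit of $x_0$ under the system is $\operatorname{orb}(x_0)=\{x_0,\ f_0(x_0),\ f_1\circ f_0(x_0),\ \dots,\ f_n\circ f_{n-1}\circ\cdots\circ f_0(x_0),\ \dots\}$, and $\overline{\operatorname{orb}(x)}^{X}$ denotes its closure in $X$. The closure $\overline{O}$ is taken in $X_0$. The system $\{f_n\}_{n=0}^\infty$ is called topologically transitive on $X_0$ if for any two nonempty open sets $U_0,V_0$ of $X_0$ there exists $n\in\mathbb{N}$ such that $(f_{n-1}\circ f_{n-2}\circ\cdots\circ f_0)(U_0)\cap V_0\neq\emptyset$. A space is Baire if the intersection of any sequence of dense open subsets is dense. *)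

From Stdlib Require Import Classical.

Set Implicit Arguments.

Record topology (X : Type) := Topology {
  open : (X -> Prop) -> Prop;
  open_full : open (fun _ => True);
  open_inter : forall U V, open U -> open V -> open (fun x => U x /\ V x);
  open_union : forall (I : Type) (F : I -> X -> Prop),
      (forall i, open (F i)) -> open (fun x => exists i, F i x)
}.

Section Topo.
Variable X : Type.
Variable T : topology X.

(* A subset S of X is regarded as a subspace with the subspace topology:
   the open sets of S are the traces U ∩ S of open sets U of X. *)

(* Continuity of f : A -> B (A, B subspaces of X), represented by a total
   map f : X -> X mapping A into B: preimages of open sets of B are open in A. *)
Definition continuous_sub (A B : X -> Prop) (f : X -> X) : Prop :=
  (forall x, A x -> B (f x)) /\
  (forall V, open T V ->
     exists U, open T U /\ forall x, A x -> (U x <-> V (f x))).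

(* Second countability of the subspace S: a countable (nat-indexed, possibly
   with repetitions / empty members) base of the subspace topology. *)
Definition second_countable_sub (S : X -> Prop) : Prop :=
  exists B : nat -> X -> Prop,
    (forall k, open T (B k)) /\
    (forall U x, open T U -> U x -> S x ->
       exists k, B k x /\ forall y, S y -> B k y -> U y).

Definition first_countable_at (x : X) : Prop :=
  exists N : nat -> X -> Prop,
    (forall k, open T (N k) /\ N k x) /\
    (forall U, open T U -> U x -> exists k, forall y, N k y -> U y).

Definition closure (A : X -> Prop) (y : X) : Prop :=
  forall U, open T U -> U y -> exists z, U z /\ A z.

Definition closure_in (S A : X -> Prop) (y : X) : Prop :=
  S y /\ forall U, open T U -> U y -> exists z, U z /\ S z /\ A z.

Definition dense_in (S A : X -> Prop) : Prop :=
  forall W, open T W -> (exists y, W y /\ S y) ->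
    exists y, W y /\ S y /\ A y.

Definition baire_sub (S : X -> Prop) : Prop :=
  forall D : nat -> X -> Prop,
    (forall k, open T (D k)) ->
    (forall k, dense_in S (fun x => D k x /\ S x)) ->
    dense_in S (fun x => S x /\ forall k, D k x).

End Topo.

Fixpoint sys_iter {X : Type} (f : nat -> X -> X) (n : nat) (x : X) : X :=
  match n with
  | O => x
  | S m => f m (sys_iter f m x)
  end.

Definition orb {X : Type} (f : nat -> X -> X) (x : X) (y : X) : Prop :=
  exists n, y = sys_iter f n x.

Definition top_transitive {X : Type} (T : topology X) (X0 : X -> Prop)
    (f : nat -> X -> X) : Prop :=
  forall U V, open T U -> open T V ->
    (exists x, U x /\ X0 x) -> (exists x, V x /\ X0 x) ->
    exists n, 1 <= n /\ exists x, U x /\ X0 x /\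
      V (sys_iter f n x) /\ X0 (sys_iter f n x).

Definition dense_orbit_points {X : Type} (T : topology X) (X0 : X -> Prop)
    (f : nat -> X -> X) (x : X) : Prop :=
  X0 x /\ forall y, X0 y -> closure T (orb f x) y.

(** Each basic open set [W] of a countable pi-base of [X_0] yields the set
    [D_W] of points of [X_0] whose orbit enters [W].  By continuity of the
    iterates [D_W] is open in [X_0], and by transitivity it is dense.  If
    [X_0] were Baire, the intersection of the [D_W] would be dense; but its
    points have dense orbits, i.e. it lies in [O], so [O] would be dense in
    [X_0], contradicting [cl O <> X_0].  First countability of [X] at the
    points of [X_0] is what makes the pi-base work for open sets of [X]:
    every open set of [X] meeting [X_0] contains some member of it. *)

From Stdlib Require Import Classical IndefiniteDescription Cantor.

Section PiBase.

Variables (X : Type) (T : topology X) (S : X -> Prop).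
Hypothesis S_second_countable : second_countable_sub T S.
Hypothesis S_first_countable : forall x, S x -> first_countable_at T x.

(* The members are the neighbourhood bases of X at one chosen point of
   each basic set of S meeting S; the point [y0] fills in for the others. *)
Lemma countable_pi_base (y0 : X) (Sy0 : S y0) :
  exists W : nat -> X -> Prop,
    (forall m, open T (W m) /\ exists y, W m y /\ S y) /\
    (forall U y, open T U -> U y -> S y -> exists m, forall z, W m z -> U z).
Proof.
  destruct S_second_countable as [B [B_open B_base]].
  assert (pick : forall k, exists d, S d /\ ((exists y, B k y /\ S y) -> B k d)).
  { intro k. destruct (classic (exists y, B k y /\ S y)) as [[y [Bky Sy]] | none].
    - exists y; auto.
    - exists y0; split; [assumption | contradiction]. }
  apply functional_choice in pick. destruct pick as [d Hd].
  assert (nbhd : forall k, first_countable_at T (d k)) by (intro k; apply S_first_countable, Hd).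
  apply functional_choice in nbhd. destruct nbhd as [N HN].
  exists (fun m => N (fst (of_nat m)) (snd (of_nat m))). split.
  - intro m. destruct (proj1 (HN (fst (of_nat m))) (snd (of_nat m))) as [N_open Nd].
    split; [assumption |]. exists (d (fst (of_nat m))). split; [assumption | apply Hd].
  - intros U y U_open Uy Sy. destruct (B_base U y U_open Uy Sy) as [k [Bky Bk_sub]].
    assert (Sd : S (d k)) by apply Hd.
    assert (Bkd : B k (d k)) by (apply Hd; eauto).
    destruct (proj2 (HN k) U U_open (Bk_sub _ Sd Bkd)) as [j Hj].
    exists (to_nat (k, j)). rewrite cancel_of_to. exact Hj.
Qed.

End PiBase.

Lemma closure_in_dense (X : Type) (T : topology X) (S A : X -> Prop) :
  dense_in T S A -> forall y, closure_in T S A y <-> S y.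
Proof.
  intros A_dense y. split.
  - intros [Sy _]. exact Sy.
  - intro Sy. split; [exact Sy |]. intros U U_open Uy. apply A_dense; eauto.
Qed.

Section NonautonomousSystem.

Variables (X : Type) (T : topology X) (Xs : nat -> X -> Prop) (f : nat -> X -> X).
Hypothesis f_continuous : forall n, continuous_sub T (Xs n) (Xs (S n)) (f n).

Lemma sys_iter_maps_into n x : Xs 0 x -> Xs n (sys_iter f n x).
Proof.
  induction n as [|n IH]; simpl; intro X0x; [exact X0x |].
  apply (proj1 (f_continuous n)). auto.
Qed.

Lemma sys_iter_continuous n V : open T V ->
  exists U, open T U /\ forall x, Xs 0 x -> (U x <-> V (sys_iter f n x)).
Proof.
  revert V. induction n as [|n IH]; intros V V_open.
  - exists V. split; [exact V_open | reflexivity].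
  - destruct (proj2 (f_continuous n) V V_open) as [U1 [U1_open HU1]].
    destruct (IH U1 U1_open) as [U [U_open HU]].
    exists U. split; [exact U_open |]. intros x X0x. simpl.
    rewrite HU by exact X0x. apply HU1, sys_iter_maps_into, X0x.
Qed.

Lemma orbit_entrance_open V : open T V ->
  exists D, open T D /\ forall x, Xs 0 x -> (D x <-> exists n, V (sys_iter f n x)).
Proof.
  intro V_open.
  assert (pre : forall n, exists U, open T U /\
            forall x, Xs 0 x -> (U x <-> V (sys_iter f n x)))
    by (intro n; apply sys_iter_continuous, V_open).
  apply functional_choice in pre. destruct pre as [U HU].
  exists (fun x => exists n, U n x). split.
  - apply open_union. intro n. apply HU.
  - intros x X0x. split; intros [n Hn]; exists n; apply (proj2 (HU n)); assumption.
Qed.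

Hypothesis f_transitive : top_transitive T (Xs 0) f.

Lemma orbit_entrance_dense V D : open T V -> (exists y, V y /\ Xs 0 y) ->
  (forall x, Xs 0 x -> (D x <-> exists n, V (sys_iter f n x))) ->
  dense_in T (Xs 0) (fun x => D x /\ Xs 0 x).
Proof.
  intros V_open V_meets HD W W_open W_meets.
  destruct (f_transitive W V W_open V_open W_meets V_meets)
    as [n [_ [x [Wx [X0x [Vfx _]]]]]].
  exists x. repeat split; try assumption. apply HD; eauto.
Qed.

Lemma dense_orbit_points_dense :
  second_countable_sub T (Xs 0) -> (forall x, Xs 0 x -> first_countable_at T x) ->
  baire_sub T (Xs 0) -> dense_in T (Xs 0) (dense_orbit_points T (Xs 0) f).
Proof.
  intros X0_second_countable X0_first_countable X0_baire U U_open [y0 [Uy0 X0y0]].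
  destruct (@countable_pi_base X T (Xs 0) X0_second_countable X0_first_countable y0 X0y0)
    as [W [HW W_pi_base]].
  assert (entrance : forall m, exists D, open T D /\
            forall x, Xs 0 x -> (D x <-> exists n, W m (sys_iter f n x)))
    by (intro m; apply orbit_entrance_open, HW).
  apply functional_choice in entrance. destruct entrance as [D HD].
  destruct (X0_baire D (fun m => proj1 (HD m))
              (fun m => orbit_entrance_dense (W m) (D m) (proj1 (HW m)) (proj2 (HW m)) (proj2 (HD m)))
              U U_open (ex_intro _ y0 (conj Uy0 X0y0)))
    as [x [Ux [X0x [_ Dx]]]].
  exists x. split; [exact Ux |]. split; [exact X0x | split; [exact X0x |]].
  intros y X0y V V_open Vy.
  destruct (W_pi_base V y V_open Vy X0y) as [m Wm_sub].
  destruct (proj1 (proj2 (HD m) x X0x) (Dx m)) as [n Wfx].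
  exists (sys_iter f n x). split; [apply Wm_sub, Wfx | exists n; reflexivity].
Qed.

End NonautonomousSystem.

Theorem theorem1p1 (X : Type) (T : topology X) (Xs : nat -> X -> Prop)
    (f : nat -> X -> X)
    (Hcont : forall n, continuous_sub T (Xs n) (Xs (S n)) (f n))
    (H2c : second_countable_sub T (Xs 0))
    (H1c : forall x, Xs 0 x -> first_countable_at T x)
    (Htrans : top_transitive T (Xs 0) f)
    (HO : ~ (forall y, closure_in T (Xs 0) (dense_orbit_points T (Xs 0) f) y
                       <-> Xs 0 y)) :
  ~ baire_sub T (Xs 0).
Proof.
  intro X0_baire. apply HO, closure_in_dense.
  exact (@dense_orbit_points_dense X T Xs f Hcont Htrans H2c H1c X0_baire).
Qed.
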